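(* Let $S$ be a semigroup with involution, $I\in\mathbb{H}$ an imaginary unit, and $\phi:S\to\mathbb{C}_I$. Then $\phi$ is complex positive definite (i.e. $\sum_{i,j=1}^n\overline{c_i}c_j\phi(s_i^*\circ s_j)\ge0$ for all $n$, $s_i\in S$, $c_i\in\mathbb{C}_I$) if and only if $\phi$ is quaternionic positive definite.
   Context: $\mathbb{H}$ is the real quaternion algebra. An imaginary unit is a quaternion $I$ with $\overline I=-I$ and $|I|=1$ (so $I^2=-1$); $\mathbb{C}_I=\mathbb{R}\oplus I\mathbb{R}$ is the corresponding complex slice. A semigroup with involution is a set $S$ with an associative binary operation $\circ$ with neutral element $e$ and a bijection $s\mapsto s^*$ with $(s^* )^*=s$, $(s\circ t)^*=t^*\circ s^*$. $\phi:S\to\mathbb{H}$ is quaternionic positive definite if $\sum_{i,j=1}^k \overline{q_i}\phi(s_i^*\circ s_j)q_j$ is a nonnegative real number for all $k$, $s_i\in S$, $q_i\in\mathbb{H}$. *)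

From mathcomp Require Import all_boot all_order all_algebra.
From mathcomp Require Import reals.
Set Implicit Arguments. Unset Strict Implicit. Unset Printing Implicit Defensive.
Import Order.TTheory GRing.Theory Num.Theory.
Local Open Scope ring_scope.

Record quat (R : realType) := Quat { qre : R; qi : R; qj : R; qk : R }.

Section Quat.
Variable R : realType.
Definition qzero : quat R := Quat 0 0 0 0.
Definition qadd (p q : quat R) : quat R :=
  Quat (qre p + qre q) (qi p + qi q) (qj p + qj q) (qk p + qk q).
Definition qopp (p : quat R) : quat R := Quat (- qre p) (- qi p) (- qj p) (- qk p).
Definition qmul (p q : quat R) : quat R :=
  Quat (qre p * qre q - qi p * qi q - qj p * qj q - qk p * qk q)
       (qre p * qi q + qi p * qre q + qj p * qk q - qk p * qj q)
       (qre p * qj q - qi p * qk q + qj p * qre q + qk p * qi q)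
       (qre p * qk q + qi p * qj q - qj p * qi q + qk p * qre q).
Definition qconj (p : quat R) : quat R := Quat (qre p) (- qi p) (- qj p) (- qk p).
Definition qreal (a : R) : quat R := Quat a 0 0 0.
Definition qnorm2 (p : quat R) : R := qre p ^+ 2 + qi p ^+ 2 + qj p ^+ 2 + qk p ^+ 2.

Definition imag_unit (I : quat R) : Prop := qconj I = qopp I /\ qnorm2 I = 1.
Definition in_slice (I q : quat R) : Prop :=
  exists a b : R, q = qadd (qreal a) (qmul I (qreal b)).
Definition nonneg_real (q : quat R) : Prop :=
  qi q = 0 /\ qj q = 0 /\ qk q = 0 /\ 0 <= qre q.
End Quat.

Definition semigroup_involution (S : Type) (op : S -> S -> S) (e : S) (star : S -> S) :=
  [/\ forall a b c, op a (op b c) = op (op a b) c,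
      forall a, op e a = a /\ op a e = a,
      forall a, star (star a) = a &
      forall a b, star (op a b) = op (star b) (star a)].

Definition quat_pos_def (R : realType) (S : Type) (op : S -> S -> S) (star : S -> S)
  (phi : S -> quat R) : Prop :=
  forall (k : nat) (s : 'I_k -> S) (q : 'I_k -> quat R),
    nonneg_real (\big[@qadd R/qzero R]_(i < k) \big[@qadd R/qzero R]_(j < k)
                   qmul (qmul (qconj (q i)) (phi (op (star (s i)) (s j)))) (q j)).

Definition complex_pos_def (R : realType) (S : Type) (op : S -> S -> S) (star : S -> S)
  (I : quat R) (phi : S -> quat R) : Prop :=
  forall (k : nat) (s : 'I_k -> S) (c : 'I_k -> quat R),
    (forall i, in_slice I (c i)) ->
    nonneg_real (\big[@qadd R/qzero R]_(i < k) \big[@qadd R/qzero R]_(j < k)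
                   qmul (qmul (qconj (c i)) (c j)) (phi (op (star (s i)) (s j)))).

(* Every quaternion splits as q = u + c w with u, c in the slice C_I and w a
   nonzero purely imaginary quaternion orthogonal to I, so that t w has zero
   real part for every t in C_I.  For the sesquilinear form
   B(p, q) = sum_ij conj(p_i) phi(s_i^* s_j) q_j this gives
     B(q, q) = B(u, u) + B(u, c) w + conj(w) B(c, u) + conj(w) B(c, c) w.
   Complex positive definiteness, applied to u + c and u + c I, forces
   B(c, u) = conj(B(u, c)), so the two middle terms cancel, and the outer terms
   are nonnegative reals.  The converse holds because slice elements commute. *)
Set Warnings "-notation-overridden,-ambiguous-paths,-redundant-canonical-projection".
From HB Require Import structures.
From mathcomp Require Import all_boot all_order all_algebra reals.
From mathcomp.algebra_tactics Require Import ring lra.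
Set Implicit Arguments. Unset Strict Implicit. Unset Printing Implicit Defensive.
Import Order.TTheory GRing.Theory Num.Theory.
Local Open Scope ring_scope.

Lemma quatP (R : realType) (p q : quat R) :
  qre p = qre q -> qi p = qi q -> qj p = qj q -> qk p = qk q -> p = q.
Proof. by case: p => ????; case: q => ???? /= -> -> -> ->. Qed.

Ltac quat_ext_ring := apply: quatP => /=; ring.

Definition quat_to_tuple (R : realType) (p : quat R) := (qre p, qi p, qj p, qk p).
Definition tuple_to_quat (R : realType) (t : R * R * R * R) :=
  Quat t.1.1.1 t.1.1.2 t.1.2 t.2.
Lemma quat_to_tupleK (R : realType) : cancel (@quat_to_tuple R) (@tuple_to_quat R).
Proof. by case. Qed.

HB.instance Definition _ (R : realType) :=
  Choice.copy (quat R) (can_type (@quat_to_tupleK R)).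

Section QuatRing.
Variable R : realType.

Lemma qaddA : associative (@qadd R). Proof. move=> ???; quat_ext_ring. Qed.
Lemma qaddC : commutative (@qadd R). Proof. move=> ??; quat_ext_ring. Qed.
Lemma qadd0 : left_id (qzero R) (@qadd R). Proof. move=> ?; quat_ext_ring. Qed.
Lemma qaddN : left_inverse (qzero R) (@qopp R) (@qadd R).
Proof. move=> ?; quat_ext_ring. Qed.
Lemma qmulA : associative (@qmul R). Proof. move=> ???; quat_ext_ring. Qed.
Lemma qmul1 : left_id (qreal 1) (@qmul R). Proof. move=> ?; quat_ext_ring. Qed.
Lemma q1mul : right_id (qreal 1) (@qmul R). Proof. move=> ?; quat_ext_ring. Qed.
Lemma qmulDl : left_distributive (@qmul R) (@qadd R).
Proof. move=> ???; quat_ext_ring. Qed.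
Lemma qmulDr : right_distributive (@qmul R) (@qadd R).
Proof. move=> ???; quat_ext_ring. Qed.
Lemma qreal1_neq0 : qreal (1 : R) != qzero R.
Proof. by apply/eqP => /(congr1 (@qre R)) /= /eqP; rewrite oner_eq0. Qed.

End QuatRing.

HB.instance Definition _ (R : realType) :=
  GRing.isZmodule.Build (quat R) (@qaddA R) (@qaddC R) (@qadd0 R) (@qaddN R).
HB.instance Definition _ (R : realType) :=
  GRing.Zmodule_isNzRing.Build (quat R) (@qmulA R) (@qmul1 R) (@q1mul R)
    (@qmulDl R) (@qmulDr R) (@qreal1_neq0 R).

Section QuatRingE.
Variable R : realType.
Lemma qaddE (p q : quat R) : p + q = qadd p q. Proof. by []. Qed.
Lemma qmulE (p q : quat R) : p * q = qmul p q. Proof. by []. Qed.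
Lemma qoppE (p : quat R) : - p = qopp p. Proof. by []. Qed.
End QuatRingE.

Ltac quat_unfold := rewrite ?(qaddE, qmulE, qoppE) /=.
Ltac quat_ring := quat_unfold; quat_ext_ring.

Section Quaternions.
Variable R : realType.
Local Notation H := (quat R).
Local Notation cj := (@qconj R).

Definition is_real (p : H) := [/\ qi p = 0, qj p = 0 & qk p = 0].

Lemma nonneg_real_is_real p : nonneg_real p -> is_real p.
Proof. by case=> ? [? [? _]]. Qed.

Lemma qconjD (p q : H) : cj (p + q) = cj p + cj q. Proof. quat_ring. Qed.
Lemma qconjM (p q : H) : cj (p * q) = cj q * cj p. Proof. quat_ring. Qed.

Lemma nonneg_real_conj_mul (w p : H) : nonneg_real p -> nonneg_real (cj w * (p * w)).
Proof.
case: p => a b c d [/= -> [-> [-> a_ge0]]]; case: w => w0 w1 w2 w3.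
rewrite /nonneg_real; quat_unfold; do 3 (split; first ring).
rewrite [X in 0 <= X](_ : _ = a * (w0 ^+ 2 + w1 ^+ 2 + w2 ^+ 2 + w3 ^+ 2)); last by ring.
by rewrite mulr_ge0 // !addr_ge0 // sqr_ge0.
Qed.

Lemma is_real_cross_terms (a b c d : H) :
  is_real (a + b + (c + d)) -> is_real a -> is_real d -> is_real (b + c).
Proof.
case: a => ????; case: b => ????; case: c => ????; case: d => ????.
by rewrite /is_real; quat_unfold => -[? ? ?] [? ? ?] [? ? ?]; split; lra.
Qed.

Lemma nonneg_real_cross_terms (a b c d : H) :
  nonneg_real a -> nonneg_real d -> b + c = 0 -> nonneg_real (a + b + (c + d)).
Proof.
case: a => ????; case: b => ????; case: c => ????; case: d => ????.
rewrite /nonneg_real; quat_unfold => -[? [? [? ?]]] [? [? [? ?]]] [? ? ? ?].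
by split; [|split; [|split]]; lra.
Qed.

Section Slice.
Variables x y z : R.
Hypothesis I_neq0 : x ^+ 2 + y ^+ 2 + z ^+ 2 != 0.
Local Notation I := (Quat 0 x y z).

Definition slice (p : H) := exists a b, p = Quat a (x * b) (y * b) (z * b).

Lemma in_sliceP p : in_slice I p <-> slice p.
Proof. by split=> -[a [b ->]]; exists a, b; quat_ext_ring. Qed.

Lemma slice0 : slice 0. Proof. by exists 0, 0; quat_ring. Qed.
Lemma sliceI : slice I. Proof. by exists 0, 1; quat_ring. Qed.
Lemma sliceD p q : slice p -> slice q -> slice (p + q).
Proof. by move=> [a [b ->]] [c [d ->]]; exists (a + c), (b + d); quat_ring. Qed.
Lemma sliceM p q : slice p -> slice q -> slice (p * q).
Proof.
move=> [a [b ->]] [c [d ->]].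
by exists (a * c - (x ^+ 2 + y ^+ 2 + z ^+ 2) * b * d), (a * d + b * c); quat_ring.
Qed.
Lemma slice_conj p : slice p -> slice (cj p).
Proof. by move=> [a [b ->]]; exists a, (- b); quat_ring. Qed.
Lemma slice_sum k (F : 'I_k -> H) : (forall i, slice (F i)) -> slice (\sum_(i < k) F i).
Proof. by move=> sF; elim/big_ind: _ => //; [exact: slice0 | exact: sliceD]. Qed.

Lemma slice_mulC p q : slice p -> slice q -> p * q = q * p.
Proof. by move=> [a [b ->]] [c [d ->]]; quat_ring. Qed.

Lemma scaleI_eq0 b : x * b = 0 -> y * b = 0 -> z * b = 0 -> b = 0.
Proof.
move=> xb yb zb; apply/eqP; rewrite -sqrf_eq0; apply/eqP/(mulIf I_neq0).
rewrite mul0r; transitivity ((x * b) ^+ 2 + (y * b) ^+ 2 + (z * b) ^+ 2); first ring.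
by rewrite xb yb zb; ring.
Qed.

Lemma slice_eq_conj z1 z2 : slice z1 -> slice z2 ->
  is_real (z1 + z2) -> is_real (I * (z1 - z2)) -> z2 = cj z1.
Proof.
move=> [a1 [b1 ->]] [a2 [b2 ->]]; rewrite /is_real; quat_unfold.
move=> [h1 h2 h3] [h4 h5 h6].
have /eqP : b1 + b2 = 0 by apply: scaleI_eq0;
  [rewrite -[RHS]h1 | rewrite -[RHS]h2 | rewrite -[RHS]h3]; ring.
have /eqP : a1 - a2 = 0 by apply: scaleI_eq0;
  [rewrite -[RHS]h4 | rewrite -[RHS]h5 | rewrite -[RHS]h6]; ring.
rewrite subr_eq0 addr_eq0 => /eqP <- /eqP ->; quat_ring.
Qed.

Definition slice_complement (w : H) (U C : H -> H) :=
  (forall q, [/\ slice (U q), slice (C q) & q = U q + C q * w]) /\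
  (forall t, slice t -> t * w + cj (t * w) = 0).

Lemma slice_complement_yz : y ^+ 2 + z ^+ 2 != 0 ->
  exists U C, slice_complement (Quat 0 0 z (- y)) U C.
Proof.
move=> yz_neq0.
pose b q := (x * qi q + y * qj q + z * qk q) / (x ^+ 2 + y ^+ 2 + z ^+ 2).
pose a' q := (z * qj q - y * qk q) / (y ^+ 2 + z ^+ 2).
pose b' q := (- (y ^+ 2 + z ^+ 2) * qi q + x * y * qj q + x * z * qk q) /
             ((x ^+ 2 + y ^+ 2 + z ^+ 2) * (y ^+ 2 + z ^+ 2)).
exists (fun q => Quat (qre q) (x * b q) (y * b q) (z * b q)).
exists (fun q => Quat (a' q) (x * b' q) (y * b' q) (z * b' q)).
split=> [q | t [a [c ->]]]; last by quat_ring.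
split; [by exists (qre q), (b q) | by exists (a' q), (b' q) |].
case: q => q0 q1 q2 q3; rewrite /b /a' /b'; quat_unfold; apply: quatP => /=;
  by field; rewrite ?I_neq0 ?yz_neq0.
Qed.

Lemma slice_complement_x : y = 0 -> z = 0 ->
  exists U C, slice_complement (Quat 0 0 1 0) U C.
Proof.
move=> y0 z0; have x_neq0 : x != 0.
  by apply: contraNneq I_neq0; rewrite y0 z0 => ->; rewrite expr0n /= !add0r.
exists (fun q => Quat (qre q) (x * (qi q / x)) (y * (qi q / x)) (z * (qi q / x))).
exists (fun q => Quat (qj q) (x * (qk q / x)) (y * (qk q / x)) (z * (qk q / x))).
split=> [q | t [a [b ->]]]; last by quat_unfold; apply: quatP => /=; rewrite y0 z0; ring.
split; [by exists (qre q), (qi q / x) | by exists (qj q), (qk q / x) |].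
by case: q => ????; quat_unfold; apply: quatP => /=; rewrite y0 z0; field.
Qed.

Lemma slice_complement_exists : exists w U C, slice_complement w U C.
Proof.
have [yz0 | yz_neq0] := eqVneq (y ^+ 2 + z ^+ 2) 0.
  have /andP[y0 z0] : (y ^+ 2 == 0) && (z ^+ 2 == 0) by rewrite -paddr_eq0 ?sqr_ge0 ?yz0.
  by exists (Quat 0 0 1 0); apply: slice_complement_x; apply/eqP; rewrite -sqrf_eq0.
by exists (Quat 0 0 z (- y)); apply: slice_complement_yz.
Qed.

Section Form.
Variables (S : Type) (op : S -> S -> S) (star : S -> S) (phi : S -> H).
Hypothesis phi_slice : forall s, slice (phi s).

Definition form k (s : 'I_k -> S) (p q : 'I_k -> H) :=
  \sum_(i < k) \sum_(j < k) cj (p i) * phi (op (star (s i)) (s j)) * q j.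

Lemma eq_form k s (p p' q q' : 'I_k -> H) :
  p =1 p' -> q =1 q' -> form s p q = form s p' q'.
Proof. by move=> ep eq; apply: eq_bigr => i _; apply: eq_bigr => j _; rewrite ep eq. Qed.

Lemma formDl k s (p1 p2 q : 'I_k -> H) :
  form s (fun i => p1 i + p2 i) q = form s p1 q + form s p2 q.
Proof.
rewrite /form -big_split; apply: eq_bigr => i _; rewrite -big_split.
by apply: eq_bigr => j _; rewrite qconjD !mulrDl.
Qed.

Lemma formDr k s (p q1 q2 : 'I_k -> H) :
  form s p (fun i => q1 i + q2 i) = form s p q1 + form s p q2.
Proof.
rewrite /form -big_split; apply: eq_bigr => i _; rewrite -big_split.
by apply: eq_bigr => j _; rewrite !mulrDr.
Qed.

Lemma formMl k s (p q : 'I_k -> H) w :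
  form s (fun i => p i * w) q = cj w * form s p q.
Proof.
rewrite /form mulr_sumr; apply: eq_bigr => i _; rewrite mulr_sumr.
by apply: eq_bigr => j _; rewrite qconjM !mulrA.
Qed.

Lemma formMr k s (p q : 'I_k -> H) w :
  form s p (fun j => q j * w) = form s p q * w.
Proof.
rewrite /form mulr_suml; apply: eq_bigr => i _; rewrite mulr_suml.
by apply: eq_bigr => j _; rewrite mulrA.
Qed.

Lemma form_slice k s (p q : 'I_k -> H) :
  (forall i, slice (p i)) -> (forall i, slice (q i)) -> slice (form s p q).
Proof.
move=> sp sq; apply: slice_sum => i; apply: slice_sum => j.
by apply: sliceM => //; apply: sliceM => //; apply: slice_conj.
Qed.

Lemma complex_sum_form k (s : 'I_k -> S) (c : 'I_k -> H) : (forall i, slice (c i)) ->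
  \big[@qadd R/qzero R]_(i < k) \big[@qadd R/qzero R]_(j < k)
     qmul (qmul (cj (c i)) (c j)) (phi (op (star (s i)) (s j))) = form s c c.
Proof.
move=> sc; apply: eq_bigr => i _; apply: eq_bigr => j _.
by rewrite -!qmulE -mulrA (slice_mulC (sc j) (phi_slice _)) mulrA.
Qed.

Hypothesis form_pos : forall k (s : 'I_k -> S) (c : 'I_k -> H),
  (forall i, slice (c i)) -> nonneg_real (form s c c).

Lemma form_herm k s (u c : 'I_k -> H) : (forall i, slice (u i)) -> (forall i, slice (c i)) ->
  form s c u = cj (form s u c).
Proof.
move=> su sc; have real_pos := fun c sc => nonneg_real_is_real (@form_pos k s c sc).
apply: slice_eq_conj; try exact: form_slice.
  have := real_pos _ (fun i => sliceD (su i) (sc i)); rewrite formDl !formDr.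
  by move/is_real_cross_terms; apply; apply: real_pos.
have scI i : slice (c i * I) by apply: sliceM => //; exact: sliceI.
have := real_pos _ (fun i => sliceD (su i) (scI i)); rewrite formDl !formDr.
move/is_real_cross_terms => /(_ (real_pos _ su) (real_pos _ scI)).
have cjI : cj I = - I by quat_ring.
by rewrite formMr formMl cjI (slice_mulC (form_slice s su sc) sliceI) mulrBr mulNr.
Qed.

Lemma form_pos_quat k (s : 'I_k -> S) (q : 'I_k -> H) : nonneg_real (form s q q).
Proof.
have [w [U [C [decomp wE]]]] := slice_complement_exists.
have su i : slice (U (q i)) by case: (decomp (q i)).
have sc i : slice (C (q i)) by case: (decomp (q i)).
have qE : q =1 (fun i => U (q i) + C (q i) * w) by move=> i; case: (decomp (q i)).
rewrite (eq_form s qE qE) formDl !formDr !formMr !formMl (form_herm s su sc) -qconjM -mulrA.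
apply: nonneg_real_cross_terms; first exact: form_pos.
  by apply/nonneg_real_conj_mul/form_pos.
by apply/wE/form_slice.
Qed.

End Form.
End Slice.
End Quaternions.

Theorem mainTheorem6 (R : realType) (S : Type) (op : S -> S -> S) (e : S)
  (star : S -> S) (I : quat R) (phi : S -> quat R) :
  semigroup_involution op e star ->
  imag_unit I ->
  (forall s, in_slice I (phi s)) ->
  (complex_pos_def op star I phi <-> quat_pos_def op star phi).
Proof.
move=> _ []; case: I => i0 x y z /(congr1 (@qre R)) /= I_re.
have -> : i0 = 0 by lra.
rewrite /qnorm2 /= expr0n add0r => I_norm phi_slice.
have I_neq0 : x ^+ 2 + y ^+ 2 + z ^+ 2 != 0 by rewrite I_norm oner_eq0.
have {}phi_slice s : slice x y z (phi s) by apply/in_sliceP.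
have sumE := complex_sum_form op star phi_slice.
split=> [pos k s q | pos k s c sc].
  have form_pos k' (s' : 'I_k' -> S) c : (forall i, slice x y z (c i)) ->
      nonneg_real (form op star phi s' c c).
    by move=> sc; rewrite -sumE //; apply: pos => i; apply/in_sliceP.
  exact: (form_pos_quat I_neq0 phi_slice form_pos s q).
by rewrite sumE; [apply: pos | move=> i; apply/in_sliceP].
Qed.
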